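(* Let $L:G\to\mathcal{L}$ be a friendly labeling function, $T$ a tree with root edge, and $e$ an interior edge of $T$. Let $\lambda^-\in{\rm im}(L^{T_{e,-}})$ and $\lambda^+\in{\rm im}(L^{T_{e,+}})$ with $\lambda^-(e)=\lambda^+(e)$. Then the labeling $\lambda:E(T)\to\mathcal{L}$ which agrees with $\lambda^-$ on the edges of $T_{e,-}$ and with $\lambda^+$ on the edges of $T_{e,+}$ is consistent, i.e. $\lambda\in{\rm im}(L^T)$.
   Context: Let $G$ be a finite abelian group written additively, $\mathcal{L}$ a finite set, $L:G\to\mathcal{L}$ a function. A tree with root edge is a finite tree $T$ with a distinguished leaf $\rho$; the edge at $\rho$ is the root edge. Every vertex $v\neq\rho$ has a unique parent edge (first edge on the path from $v$ to $\rho$); other edges at $v$ are child edges. Vertices that are neither $\rho$ nor leaves are interior vertices; an edge is interior if both endpoints are interior vertices. $E(T)$ is the edge set. An edge $e'$ is below $e$ if $e$ lies on the path from $\rho$ to $e'$ (so $e$ is below itself). A map $h:E(T)\to G$ is a consistent assignment if for every interior vertex $v$, $h(\text{parent edge of }v)=\sum h(\text{child edges of }v)$. ${\rm im}(L^T)=\{L\circ h: h\text{ consistent}\}\subseteq\mathcal{L}^{E(T)}$ is the set of consistent labelings. For an edge $e$, $T_{e,-}$ is the tree formed by all edges below $e$, regarded as a tree with root edge $e$ (distinguished leaf = endpoint of $e$ closer to $\rho$); $T_{e,+}$ is the tree formed by $e$ and all edges not below $e$, with the same $\rho$ (the endpoint of $e$ farther from $\rho$ becomes a leaf). Friendliness: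 for $m\ge3$ let $Z_m=\{(g_1,\dots,g_m)\in G^m: g_1+\cdots+g_{m-1}=g_m\}$ and $\widetilde{L}(g_1,\dots,g_m)=(L(g_1),\dots,L(g_m))$; $L$ is $m$-friendly if for every $l\in\widetilde{L}(Z_m)$ and every $i$, the set of $i$-th coordinates of elements of $\widetilde{L}^{-1}(l)$ equals $L^{-1}(l_i)$; $L$ is friendly if it is $m$-friendly for all $m\ge3$. *)

From HB Require Import structures.
From mathcomp Require Import all_boot all_order all_algebra.
Set Implicit Arguments. Unset Strict Implicit. Unset Printing Implicit Defensive.
Import GRing.Theory.
Local Open Scope ring_scope.

(* We index m = n.+1, so tuples are {ffun 'I_n.+1 -> _} and the last   *)
(* coordinate g_m is g ord_max.                                        *)

Definition Zset (G : finZmodType) (n : nat) : {set {ffun 'I_n.+1 -> G}} :=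
  [set g : {ffun 'I_n.+1 -> G} |
     \sum_(j < n.+1 | j != ord_max) g j == g ord_max].

Definition Ltilde (G : finZmodType) (Lab : finType) (L : G -> Lab) (n : nat)
  (g : {ffun 'I_n.+1 -> G}) : {ffun 'I_n.+1 -> Lab} := [ffun j => L (g j)].

Definition friendly_at (G : finZmodType) (Lab : finType) (L : G -> Lab) (n : nat) : Prop :=
  forall l : {ffun 'I_n.+1 -> Lab},
    l \in [set Ltilde L (g : {ffun 'I_n.+1 -> G}) | g in Zset G n] ->
    forall i : 'I_n.+1,
      [set (g : {ffun 'I_n.+1 -> G}) i | g in [set g in Zset G n | Ltilde L g == l]] = [set x | L x == l i].

(* friendly = m-friendly for every m >= 3, i.e. n.+1 >= 3 *)
Definition friendly (G : finZmodType) (Lab : finType) (L : G -> Lab) : Prop :=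
  forall n : nat, (2 <= n)%N -> friendly_at L n.

(* Trees with root edge, encoded by a parent function on a finite      *)
(* vertex type V: vertex v <> rho is joined to its parent par v, and   *)
(* the edge {v, par v} is identified with the vertex v (its endpoint   *)
(* farther from rho).                                                  *)

Definition is_tree_with_root_edge (V : finType) (rho : V) (par : V -> V) : Prop :=
  [/\ par rho = rho,
      (forall v : V, fconnect par v rho) &
      #|[set v | (v != rho) && (par v == rho)]| = 1%N ].  (* rho is a leaf *)

(* A (sub)tree with root edge described inside V by its vertex set S,  *)
(* its distinguished leaf r, and the (restricted) parent function par. *)
Section SubTree.
Variables (V : finType) (par : V -> V) (S : {set V}) (r : V).

Definition tedges : {set V} := [set v in S | v != r].

Definition tchildren (v : V) : {set V} := [set c in tedges | par c == v].

Definition tinterior (v : V) : bool :=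
  [&& v \in S, v != r & tchildren v != set0].

(* consistent assignment (values outside tedges are irrelevant) *)
Definition consistent (G : zmodType) (h : V -> G) : Prop :=
  forall v, tinterior v -> h v = \sum_(c in tchildren v) h c.

Definition in_im (G : zmodType) (Lab : Type) (L : G -> Lab) (lam : V -> Lab) : Prop :=
  exists h : V -> G, consistent h /\ forall v, v \in tedges -> lam v = L (h v).
End SubTree.

(* edge v is below edge u : u lies on the path from rho to v *)
Definition below (V : finType) (par : V -> V) (u v : V) : bool := fconnect par v u.

(* T_{e,-} for e = u: the edges below u, together with the endpoint par u *)
Definition Tminus_vertices (V : finType) (par : V -> V) (u : V) : {set V} :=
  [set v | below par u v] :|: [set par u].

(* T_{e,+} for e = u: e and all edges not below e, with their endpoints *)
Definition Tplus_vertices (V : finType) (par : V -> V) (u : V) : {set V} :=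
  [set v | ~~ below par u v] :|: [set u].

From mathcomp Require Import all_boot all_order all_algebra.
Set Implicit Arguments. Unset Strict Implicit. Unset Printing Implicit Defensive.
Import GRing.Theory.
Local Open Scope ring_scope.

(* Friendliness lets one change the value on an edge to any value with the
   same label and then redistribute it among the child edges, again keeping
   every label; recursing down the tree, any consistent assignment on the
   subtree below e can be modified, without changing its labels, so that its
   value at e becomes any prescribed value with the label of e.  Choosing the
   value that the consistent assignment of T_{e,+} takes at e, the two
   assignments glue to a consistent assignment of T realizing lambda. *)

Lemma sum_lift_max (G : zmodType) k (F : 'I_k.+1 -> G) :
  \sum_(j < k.+1 | j != ord_max) F j = \sum_(i < k) F (lift ord_max i).
Proof.
apply: (@addrI _ (F ord_max)).
by rewrite -(bigD1_ord ord_max (P := xpredT)) // [RHS](bigD1 ord_max).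
Qed.

Lemma friendly_decompose (G : finZmodType) (Lab : finType) (L : G -> Lab)
    (I : finType) (C : {set I}) (x : I -> G) (g : G) :
  friendly L -> C != set0 -> L g = L (\sum_(c in C) x c) ->
  exists2 y : I -> G, {in C, forall c, L (y c) = L (x c)} & \sum_(c in C) y c = g.
Proof.
move=> frL /set0Pn[c0 Cc0] Lg.
have [C2|C1] := ltnP 1 #|C|; last first.
  have /cards1P[c1 C1E] : #|C| == 1%N.
    by rewrite eqn_leq C1 card_gt0; apply/set0Pn; exists c0.
  exists (fun=> g); last by rewrite C1E big_set1.
  by move=> c; rewrite C1E inE => /eqP->; rewrite Lg C1E big_set1.
pose k := #|C|.
pose x0 : {ffun 'I_k.+1 -> G} :=
  [ffun j => if unlift ord_max j is Some i then x (enum_val i) else \sum_(c in C) x c].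
have x0_lift i : x0 (lift ord_max i) = x (enum_val i) by rewrite ffunE liftK.
have x0_max : x0 ord_max = \sum_(c in C) x c by rewrite ffunE unlift_none.
have x0Z : x0 \in Zset G k.
  rewrite inE sum_lift_max x0_max [in X in _ == X]big_enum_val.
  by apply/eqP/eq_bigr => i _; rewrite x0_lift.
have := frL k C2 (Ltilde L x0) (imset_f _ x0Z) ord_max.
move=> /setP/(_ g); rewrite inE ffunE x0_max Lg eqxx.
case/imsetP=> y0; rewrite inE => /andP[y0Z /eqP y0L] ->.
exists (fun c => y0 (lift ord_max (enum_rank_in Cc0 c))).
  move=> c Cc; pose i := lift ord_max (enum_rank_in Cc0 c).
  have := congr1 (fun l : {ffun _ -> Lab} => l i) y0L.
  by rewrite !ffunE liftK enum_rankK_in.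
rewrite big_enum_val /=; under eq_bigr do rewrite enum_valK_in.
by rewrite -sum_lift_max; move: y0Z; rewrite inE => /eqP.
Qed.

Section ParentMap.
Variables (V : finType) (par : V -> V).

Lemma belowP u v : reflect (exists n, iter n par v = u) (below par u v).
Proof.
apply: (iffP idP) => [buv|[n <-]]; last exact: fconnect_iter.
by exists (findex par v u); apply: iter_findex.
Qed.

Lemma below_refl u : below par u u.
Proof. exact: connect0. Qed.

Lemma below_trans a b c : below par a b -> below par b c -> below par a c.
Proof. by move=> bab bbc; apply: connect_trans bbc bab. Qed.

Lemma below_par u c : below par u (par c) -> below par u c.
Proof. exact/connect_trans/fconnect1. Qed.

Lemma below_step u v : below par u v -> v != u -> below par u (par v).
Proof.
case/belowP=> [[|n] <-]; first by rewrite eqxx.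
by move=> _; apply/belowP; exists n; rewrite -iterSr.
Qed.

Lemma below_total a b v : below par a v -> below par b v -> below par a b || below par b a.
Proof.
case/belowP=> i <- /belowP[j <-]; have [ij|/ltnW ji] := leqP i j.
  by apply/orP; right; apply/belowP; exists (j - i)%N; rewrite -iterD subnK.
by apply/orP; left; apply/belowP; exists (i - j)%N; rewrite -iterD subnK.
Qed.

Lemma eq_tchildren (S S' : {set V}) r r' v :
    (forall c, par c = v -> (c \in tedges S r) = (c \in tedges S' r')) ->
  tchildren par S r v = tchildren par S' r' v.
Proof.
move=> edgeE; apply/setP => c; rewrite [LHS]inE [RHS]inE.
by have [/edgeE->|] := eqVneq (par c) v; rewrite ?andbF.
Qed.

Lemma tinteriorE (S : {set V}) r v :
  tinterior par S r v = (v \in tedges S r) && (tchildren par S r v != set0).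
Proof. by rewrite /tinterior inE andbA. Qed.

End ParentMap.

Section Tree.
Variables (V : finType) (rho : V) (par : V -> V).
Hypothesis tree : is_tree_with_root_edge rho par.

Local Notation children u := (tchildren par [set: V] rho u).

Lemma in_children u c : (c \in children u) = (c != rho) && (par c == u).
Proof. by rewrite !inE. Qed.

Lemma par_root : par rho = rho.
Proof. by case: tree. Qed.

Lemma below_root u : below par u rho -> u = rho.
Proof.
case/belowP=> n <-; elim: n => //= n ->; exact: par_root.
Qed.

Lemma below_parent_root c : below par c (par c) -> c = rho.
Proof.
(* c would be periodic under par, yet its orbit reaches the fixed point rho. *)
case/belowP=> k cyc; have [_ reach _] := tree.
have cycm m : iter (m * k.+1) par c = c.
  by elim: m => // m IHm; rewrite mulSn iterD IHm iterSr.
have /belowP[n root_c] := reach c.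
by rewrite -(cycm n) mulnSr iterD root_c; apply: below_root; apply/belowP; exists (n * k)%N.
Qed.

Lemma below_child u v : u != rho -> below par u v -> v != u ->
  exists2 c, c \in children u & below par c v.
Proof.
move=> u_rho /belowP[[|n] iter_v] vu; first by rewrite -iter_v eqxx in vu.
exists (iter n par v); last exact: fconnect_iter.
rewrite in_children -iterS iter_v eqxx andbT; apply: contraNneq u_rho => c_rho.
by rewrite -iter_v iterS c_rho par_root.
Qed.

Lemma children_disjoint u c1 c2 v : c1 \in children u -> c2 \in children u ->
  below par c1 v -> below par c2 v -> c1 = c2.
Proof.
have sub a b : a \in children u -> b \in children u -> below par a b -> a = b.
  rewrite !in_children => /andP[a_rho /eqP pa] /andP[_ /eqP pb] bab.
  apply/eqP; apply: contraNT a_rho => /eqP/nesym/eqP ba.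
  by apply/eqP/below_parent_root; rewrite pa -pb below_step.
move=> c1u c2u b1 b2; case/orP: (below_total b1 b2) => [/sub->//|/sub<-//].
Qed.

Definition consistent_below (G : zmodType) u (h : V -> G) :=
  forall v, below par u v -> tinterior par [set: V] rho v ->
    h v = \sum_(c in children v) h c.

Lemma child_belowN u c : c \in children u -> ~~ below par c u.
Proof.
rewrite in_children => /andP[c_rho /eqP pc]; apply: contra c_rho => bcu.
by apply/eqP/below_parent_root; rewrite pc.
Qed.

Section JoinChildren.
Variables (G : zmodType) (u : V) (g : G) (H : V -> V -> G).

Definition join_children v : G :=
  if v == u then g
  else if [pick c in children u | below par c v] is Some c then H c v else 0.

Lemma join_children_root : join_children u = g.
Proof. by rewrite /join_children eqxx. Qed.

Lemma join_childrenE c v : c \in children u -> below par c v -> join_children v = H c v.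
Proof.
move=> cu bcv; rewrite /join_children ifN; last by apply: contraNneq (child_belowN cu) => <-.
case: pickP => [c' /andP[c'u bc'v]|/(_ c)]; last by rewrite cu bcv.
by rewrite (children_disjoint c'u cu bc'v bcv).
Qed.

Lemma consistent_join_children : u != rho ->
    {in children u, forall c, consistent_below c (H c)} ->
    (children u != set0 -> \sum_(c in children u) H c c = g) ->
  consistent_below u join_children.
Proof.
move=> u_rho H_cons H_sum v buv; have [-> u_int|vu v_int] := eqVneq v u.
  rewrite join_children_root -H_sum; last by move: u_int; rewrite tinteriorE => /andP[].
  by apply: eq_bigr => c cu; rewrite (join_childrenE cu (below_refl _ _)).
have [c cu bcv] := below_child u_rho buv vu.
rewrite (join_childrenE cu bcv) H_cons //; apply: eq_bigr => c'.
rewrite in_children => /andP[_ /eqP pc'].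
by rewrite (join_childrenE cu) //; apply: below_par; rewrite pc'.
Qed.

End JoinChildren.

Lemma relabel_subtree (G : finZmodType) (Lab : finType) (L : G -> Lab) :
    friendly L -> forall u (h : V -> G) g,
  u != rho -> consistent_below u h -> L g = L (h u) ->
  exists h' : V -> G, [/\ consistent_below u h', h' u = g &
    forall v, below par u v -> L (h' v) = L (h v)].
Proof.
move=> frL u; have [n] := ubnP #|[set v | below par u v]|.
elim: n u => // n IHn u size_u h g u_rho h_cons Lg.
have [gc gcL gcS] : exists2 gc : V -> G, {in children u, forall c, L (gc c) = L (h c)}
    & (children u != set0 -> \sum_(c in children u) gc c = g).
  have [C0|C0] := eqVneq (children u) set0; first by exists h => //; rewrite C0 eqxx.
  have u_int : tinterior par [set: V] rho u by rewrite /tinterior inE u_rho C0.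
  have Lg_sum : L g = L (\sum_(c in children u) h c) by rewrite -h_cons ?below_refl.
  by have [y] := friendly_decompose frL C0 Lg_sum; exists y.
have /fin_all_exists[H HP] c : exists Hc : V -> G, c \in children u ->
    [/\ consistent_below c Hc, Hc c = gc c &
        forall v, below par c v -> L (Hc v) = L (h v)].
  have [cu|_] := boolP (c \in children u); last by exists h.
  move: (cu); rewrite in_children => /andP[c_rho /eqP pc].
  have buc : below par u c by apply: below_par; rewrite pc below_refl.
  have size_c : (#|[set v | below par c v]| < n)%N.
    rewrite -ltnS; apply: leq_trans size_u; apply/proper_card/properP; split.
      by apply/subsetP => v; rewrite !inE; apply: below_trans.
    by exists u; rewrite !inE ?below_refl ?child_belowN.
  have h_cons_c : consistent_below c h.
    by move=> v bcv; apply: h_cons; apply: below_trans bcv.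
  by have [Hc] := IHn c size_c h (gc c) c_rho h_cons_c (gcL c cu); exists Hc.
exists (join_children u g H); split; first apply: consistent_join_children => //.
- by move=> c /HP[].
- by move=> /gcS <-; apply: eq_bigr => c /HP[].
- exact: join_children_root.
move=> v buv; have [->|vu] := eqVneq v u; first by rewrite join_children_root.
have [c cu bcv] := below_child u_rho buv vu.
by rewrite (join_childrenE g H cu bcv); case: (HP c cu) => _ _ ->.
Qed.

Lemma mem_tedges_Tminus e w : e != rho ->
  (w \in tedges (Tminus_vertices par e) (par e)) = below par e w.
Proof.
move=> e_rho; rewrite !inE; have [bew|_] /= := boolP (below par e w); last by case: eqP.
apply/idP; apply: contraNneq e_rho => w_pe.
by apply/eqP/below_parent_root; rewrite -w_pe.
Qed.

Lemma mem_tedges_Tplus e w : ~~ below par e (par w) ->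
  (w \in tedges (Tplus_vertices par e) rho) = (w != rho).
Proof.
move=> nb; rewrite !inE; have [bew|] //= := boolP (below par e w).
have -> : w = e by apply: contraNeq nb; apply: below_step.
by rewrite eqxx.
Qed.

Lemma consistent_Tminus (G : zmodType) e (h : V -> G) : e != rho ->
  consistent par (Tminus_vertices par e) (par e) h -> consistent_below e h.
Proof.
move=> e_rho h_cons v bev v_int.
have edgeE w : below par e w ->
    (w \in tedges (Tminus_vertices par e) (par e)) = (w \in tedges [set: V] rho).
  move=> bew; rewrite mem_tedges_Tminus // bew !inE; apply/esym.
  by apply: contraNneq e_rho => w_rho; apply/eqP/below_root; rewrite -w_rho.
have childE c : par c = v ->
    (c \in tedges (Tminus_vertices par e) (par e)) = (c \in tedges [set: V] rho).
  by move=> pc; apply: edgeE; apply: below_par; rewrite pc.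
rewrite -(eq_tchildren childE) h_cons //.
by rewrite tinteriorE (edgeE v bev) (eq_tchildren childE) -tinteriorE.
Qed.

Lemma consistent_graft (G : zmodType) e (h1 h2 : V -> G) :
  consistent_below e h1 -> consistent par (Tplus_vertices par e) rho h2 -> h1 e = h2 e ->
  consistent par [set: V] rho (fun v => if below par e v then h1 v else h2 v).
Proof.
move=> h1_cons h2_cons h12 v v_int; case: ifPn => [bev|nbev].
  rewrite h1_cons //; apply: eq_bigr => c; rewrite in_children => /andP[_ /eqP pc].
  by rewrite ifT //; apply: below_par; rewrite pc.
have edgeE w : ~~ below par e (par w) ->
    (w \in tedges (Tplus_vertices par e) rho) = (w \in tedges [set: V] rho).
  by move=> nb; rewrite mem_tedges_Tplus // !inE.
have childE c : par c = v ->
    (c \in tedges (Tplus_vertices par e) rho) = (c \in tedges [set: V] rho).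
  by move=> pc; apply: edgeE; rewrite pc.
have vE := edgeE v (contra (@below_par _ _ _ _) nbev).
rewrite h2_cons; last by rewrite tinteriorE vE (eq_tchildren childE) -tinteriorE.
rewrite (eq_tchildren childE); apply: eq_bigr => c; rewrite in_children => /andP[_ /eqP pc].
case: ifPn => // bec; suff -> : c = e by [].
by apply: contraNeq nbev; rewrite -pc; apply: below_step.
Qed.

End Tree.

Theorem lemma3p6 (G : finZmodType) (Lab : finType) (L : G -> Lab)
  (V : finType) (rho : V) (par : V -> V) (e : V)
  (lm lp lam : V -> Lab) :
  friendly L ->
  is_tree_with_root_edge rho par ->
  (* e is an edge whose two endpoints e and par e are interior vertices *)
  e != rho ->
  tinterior par [set: V] rho e ->
  tinterior par [set: V] rho (par e) ->
  in_im par (Tminus_vertices par e) (par e) L lm ->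
  in_im par (Tplus_vertices par e) rho L lp ->
  lm e = lp e ->
  (forall v, v \in tedges (Tminus_vertices par e) (par e) -> lam v = lm v) ->
  (forall v, v \in tedges (Tplus_vertices par e) rho -> lam v = lp v) ->
  in_im par [set: V] rho L lam.
Proof.
move=> frL tree e_rho _ _ [hm [hm_cons hm_lab]] [hp [hp_cons hp_lab]] lm_lp lam_m lam_p.
have e_par_e : ~~ below par e (par e) by apply: contra e_rho => /(below_parent_root tree)->.
have e_m : e \in tedges (Tminus_vertices par e) (par e).
  by rewrite (mem_tedges_Tminus tree) ?below_refl.
have e_p : e \in tedges (Tplus_vertices par e) rho by rewrite mem_tedges_Tplus.
have Le : L (hp e) = L (hm e) by rewrite -hm_lab // lm_lp hp_lab.
have [h' [h'_cons h'_e h'_lab]] :=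
  relabel_subtree tree frL e_rho (consistent_Tminus tree e_rho hm_cons) Le.
exists (fun v => if below par e v then h' v else hp v); split.
  by apply: consistent_graft; rewrite ?h'_e.
move=> v; rewrite !inE => v_rho; case: ifPn => [bev|nbev].
  by rewrite lam_m ?hm_lab ?h'_lab ?(mem_tedges_Tminus tree).
by rewrite lam_p ?hp_lab // mem_tedges_Tplus // (contra (@below_par _ _ _ _) nbev).
Qed.
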